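(* Let $r,K,\alpha,\phi,c,m_1,m_2,\lambda,a,d,\delta,\gamma,\sigma,\eta$ be positive constants with $\phi<1$ and $m_1>m_2$, and consider the system \[ \begin{cases} \dot X = rX\left(1-\frac{X}{K}\right)-\frac{\alpha XS}{c+X}-\frac{\phi\alpha XI}{c+X},\\[1mm] \dot S = \frac{m_1\alpha XS}{c+X}-\frac{\lambda AS}{a+A}-dS,\\[1mm] \dot I = \frac{m_2\phi\alpha XI}{c+X}+\frac{\lambda AS}{a+A}-(d+\delta)I,\\[1mm] \dot A = \gamma+\sigma(S+I)-\eta A. \end{cases} \] The pest-free equilibrium $E_1=(K,0,0,\gamma/\eta)$ is (locally) stable if \[ \frac{m_1\alpha K}{c+K}<\frac{\lambda\gamma}{a\eta+\gamma}+d\quad\text{and}\quad \frac{m_2\phi\alpha K}{c+K}<d+\delta, \] and unstable if \[ \frac{m_1\alpha K}{c+K}>\frac{\lambda\gamma}{a\eta+\gamma}+d\quad\text{or}\quad \frac{m_2\phi\alpha K}{c+K}>d+\delta. \] *)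

From HB Require Import structures.
From mathcomp Require Import all_boot all_order all_algebra.
From mathcomp Require Import all_classical all_reals all_analysis.
From mathcomp.real_closed Require Import complex.
Set Implicit Arguments. Unset Strict Implicit. Unset Printing Implicit Defensive.
Import Order.TTheory GRing.Theory Num.Theory.
Local Open Scope ring_scope.

(* State vector (X, S, I, A) as a function 'I_4 -> R:
   component 0 = X (prey/crop), 1 = S, 2 = I, 3 = A. *)
Definition st (R : realType) := 'I_4 -> R.

Definition pest_field (R : realType)
  (r K alpha phi c m1 m2 lambda a d delta gamma sigma eta : R)
  (x : st R) : st R :=
  fun i =>
    let X := x ord0 in
    let S := x (inord 1) in
    let I := x (inord 2) in
    let A := x (inord 3) in
    match val i with
    | 0 => r * X * (1 - X / K) - alpha * X * S / (c + X) - phi * alpha * X * I / (c + X)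
    | 1 => m1 * alpha * X * S / (c + X) - lambda * A * S / (a + A) - d * S
    | 2 => m2 * phi * alpha * X * I / (c + X) + lambda * A * S / (a + A) - (d + delta) * I
    | _ => gamma + sigma * (S + I) - eta * A
    end.

Definition evec (R : realType) (j : 'I_4) : st R := fun k => if k == j then 1 else 0.

Definition jacobian (R : realType) (F : st R -> st R) (x : st R) : 'M[R]_4 :=
  \matrix_(i < 4, j < 4)
    derive1 (fun t : R => F (fun k => x k + t * evec R j k) i) 0.

Definition eigenvalue (R : realType) (M : 'M[R]_4) (z : R[i]) : Prop :=
  root (map_poly (fun t : R => (t%:C)%C) (char_poly M)) z.

Definition locally_stable (R : realType) (F : st R -> st R) (x : st R) : Prop :=
  forall z : R[i], eigenvalue (jacobian F x) z -> Re z < 0.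

Definition unstable (R : realType) (F : st R -> st R) (x : st R) : Prop :=
  exists z : R[i], eigenvalue (jacobian F x) z /\ 0 < Re z.

Definition E1 (R : realType) (K gamma eta : R) : st R :=
  fun i => match val i with 0 => K | 3 => gamma / eta | _ => 0 end.

(* At E1 = (K, 0, 0, gamma/eta) the pest classes S and I vanish, so the
   Jacobian columns of X and A are -r e_X and -eta e_A, and the remaining
   (S, I) block is lower triangular. The eigenvalues are therefore the real
   numbers -r, -eta, m1 alpha K/(c+K) - lambda gamma/(a eta + gamma) - d and
   m2 phi alpha K/(c+K) - (d + delta), and the threshold conditions are exactly
   the signs of the last two. *)
From Pilot Require Import Defs.
From HB Require Import structures.
From mathcomp Require Import all_boot all_order all_algebra.
From mathcomp Require Import all_classical all_reals all_analysis.
From mathcomp.real_closed Require Import complex.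
From mathcomp Require Import ring lra.
Set Implicit Arguments. Unset Strict Implicit.
Import Order.TTheory GRing.Theory Num.Theory.
Local Open Scope ring_scope.

Lemma derive1_quadratic_at0 (R : realType) (f : R -> R) (q : R) :
  (exists s, forall t, f t = f 0 + q * t + s * t ^+ 2) -> derive1 f 0 = q.
Proof.
move=> [s fE]; rewrite (funext fE) derive1E derive_val.
rewrite !(scale0r, scaler0, addr0, add0r, mul1r); exact: mulr1.
Qed.

Section RealSpectrum.
Variable R : realType.

(* [Defs.] is needed because MathComp also exports an [eigenvalue] and a [jacobian]. *)

Lemma eigenvalue_prod_XsubC (M : 'M[R]_4) (s : seq R) :
  char_poly M = \prod_(y <- s) ('X - y%:P) ->
  forall z, Defs.eigenvalue M z <-> z \in map (fun y : R => y%:C%C) s.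
Proof.
move=> chiM z; rewrite /Defs.eigenvalue chiM rmorph_prod /=.
under eq_bigr do rewrite map_polyXsubC.
by rewrite -(big_map (fun y : R => y%:C%C) predT (fun w => 'X - w%:P)) root_prod_XsubC.
Qed.

Lemma locally_stable_prod_XsubC (F : st R -> st R) (x : st R) (s : seq R) :
  char_poly (Defs.jacobian F x) = \prod_(y <- s) ('X - y%:P) ->
  all (fun y => y < 0) s -> locally_stable F x.
Proof.
move=> chiJ /allP neg_s z /(eigenvalue_prod_XsubC chiJ) /mapP[y ys ->].
by rewrite -complexRe ltcR neg_s.
Qed.

Lemma unstable_prod_XsubC (F : st R -> st R) (x : st R) (s : seq R) :
  char_poly (Defs.jacobian F x) = \prod_(y <- s) ('X - y%:P) ->
  has (fun y => 0 < y) s -> unstable F x.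
Proof.
move=> chiJ /hasP[y ys pos_y]; exists y%:C%C; split.
  by apply/(eigenvalue_prod_XsubC chiJ)/mapP; exists y.
by rewrite -complexRe ltcR.
Qed.

End RealSpectrum.

Lemma inord1_4 : (inord 1 : 'I_4) = Ordinal (isT : (1 < 4)%N).
Proof. by apply: val_inj; rewrite /= inordK. Qed.

Lemma inord2_4 : (inord 2 : 'I_4) = Ordinal (isT : (2 < 4)%N).
Proof. by apply: val_inj; rewrite /= inordK. Qed.

Lemma inord3_4 : (inord 3 : 'I_4) = Ordinal (isT : (3 < 4)%N).
Proof. by apply: val_inj; rewrite /= inordK. Qed.

Section PestFreeEquilibrium.
Variables (R : realType) (r K alpha phi c m1 m2 lambda a d delta gamma sigma eta : R).

Let F := pest_field r K alpha phi c m1 m2 lambda a d delta gamma sigma eta.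
Let A1 := gamma / eta.
Let rate_S := m1 * alpha * K / (c + K) - lambda * A1 / (a + A1) - d.
Let rate_I := m2 * phi * alpha * K / (c + K) - (d + delta).

Definition jacobian_E1_mx : 'M[R]_4 := \matrix_(i < 4, j < 4)
  match val i, val j with
  | 0, 0 => - r
  | 0, 1 => - (alpha * K / (c + K))
  | 0, 2 => - (phi * alpha * K / (c + K))
  | 1, 1 => rate_S
  | 2, 1 => lambda * A1 / (a + A1)
  | 2, 2 => rate_I
  | 3, 1 => sigma
  | 3, 2 => sigma
  | 3, 3 => - eta
  | _, _ => 0
  end.

Lemma jacobian_pest_field_E1 : K != 0 -> Defs.jacobian F (E1 K gamma eta) = jacobian_E1_mx.
Proof.
move=> K_neq0; apply/matrixP => i j; rewrite !mxE /F /pest_field inord1_4 inord2_4 inord3_4.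
case: i => [[|[|[|[|//]]]] ?]; case: j => [[|[|[|[|//]]]] ?];
  apply: derive1_quadratic_at0; rewrite /E1 /evec /rate_S /rate_I /A1 /=.
all: try by exists 0 => t; rewrite !(mulr0, mul0r, addr0, add0r, subr0, mulr1, oppr0); ring.
by exists (- r / K) => t; rewrite !(mulr0, mul0r, addr0, add0r, subr0, mulr1); field.
Qed.

Lemma char_poly_jacobian_E1_mx :
  char_poly jacobian_E1_mx = \prod_(y <- [:: - r; rate_S; rate_I; - eta]) ('X - y%:P).
Proof.
rewrite /char_poly (expand_det_col _ ord0) !big_ord_recl big_ord0 !mxE /=.
rewrite !mulr0n polyC0 subr0 !mul0r !addr0 mulr1n.
rewrite /cofactor det_trig; last first.
  apply/is_trig_mxP => i j; rewrite !mxE.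
  by case: i => [[|[|[|//]]] ?]; case: j => [[|[|[|//]]] ?] //= _; rewrite polyC0 subr0.
by rewrite !big_ord_recl !big_cons big_ord0 big_nil !mxE /= expr0 mul1r !mulr1n !mulr1.
Qed.

End PestFreeEquilibrium.

Theorem theorem3 (R : realType)
  (r K alpha phi c m1 m2 lambda a d delta gamma sigma eta : R)
  (hr : 0 < r) (hK : 0 < K) (halpha : 0 < alpha) (hphi : 0 < phi) (hc : 0 < c)
  (hm1 : 0 < m1) (hm2 : 0 < m2) (hlambda : 0 < lambda) (ha : 0 < a) (hd : 0 < d)
  (hdelta : 0 < delta) (hgamma : 0 < gamma) (hsigma : 0 < sigma) (heta : 0 < eta)
  (hphi1 : phi < 1) (hm12 : m2 < m1) :
  let F := pest_field r K alpha phi c m1 m2 lambda a d delta gamma sigma eta in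
  (m1 * alpha * K / (c + K) < lambda * gamma / (a * eta + gamma) + d /\
   m2 * phi * alpha * K / (c + K) < d + delta ->
   locally_stable F (E1 K gamma eta)) /\
  (m1 * alpha * K / (c + K) > lambda * gamma / (a * eta + gamma) + d \/
   m2 * phi * alpha * K / (c + K) > d + delta ->
   unstable F (E1 K gamma eta)).
Proof.
move=> F.
have chiJ := char_poly_jacobian_E1_mx r K alpha phi c m1 m2 lambda a d delta gamma sigma eta.
rewrite -jacobian_pest_field_E1 ?gt_eqF // in chiJ.
have infection_E1 : lambda * (gamma / eta) / (a + gamma / eta) = lambda * gamma / (a * eta + gamma).
  by field; rewrite !gt_eqF //; nra.
rewrite infection_E1 in chiJ.
split=> [[stab_S stab_I] | unstab].
  apply: (locally_stable_prod_XsubC chiJ).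
  by rewrite /= andbT; apply/and4P; split; lra.
apply: (unstable_prod_XsubC chiJ).
case: unstab => unstab; rewrite /= orbF; apply/or4P.
  by apply: Or42; lra.
by apply: Or43; lra.
Qed.
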